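(* Let $0<c<1$ and $0<d<1$ be irrational numbers, and let $f(n)=[c(n+1)]-[cn]$ and $g(n)=[d(n+1)]-[dn]$. Then for every nonnegative integer $k$ and every real $t\ge0$, $$\sum_{n\le t} f(n)\,g([cn]+k+1)=[d([c([t]+1)]+k+1)]-[d(k+1)],$$ where the sum is over positive integers $n\le t$.
   Context: $[x]$ is the greatest integer not exceeding $x$. *)

From mathcomp Require Import all_boot all_order all_algebra.
From mathcomp Require Import all_classical all_reals.
Set Implicit Arguments. Unset Strict Implicit. Unset Printing Implicit Defensive.
Import Order.TTheory GRing.Theory Num.Theory.
Local Open Scope ring_scope.

Definition fdiff (R : realType) (c : R) (n : int) : int :=
  Num.floor (c * (n + 1)%:~R) - Num.floor (c * n%:~R).

From mathcomp Require Import all_boot all_order all_algebra.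
From mathcomp Require Import all_classical all_reals.
From mathcomp Require Import zify.
Import Order.TTheory GRing.Theory Num.Theory.
Local Open Scope ring_scope.

(* Since 0 < c < 1, each jump f(n) is 0 or 1, so f(n) g([cn]+k+1) is the
   increment of F(n) = [d([cn]+k+1)] from n to n+1 and the sum telescopes. *)

Section FloorJumps.

Context {R : realType}.

Lemma floorD_unit_interval (x y : R) : 0 <= y <= 1 ->
  Num.floor (x + y) = Num.floor x \/ Num.floor (x + y) = Num.floor x + 1.
Proof.
case/andP=> y_ge0 y_le1.
have lo : Num.floor x <= Num.floor (x + y) by apply: le_floor; rewrite lerDl.
have hi : Num.floor (x + y) < Num.floor x + 1 + 1.
  by rewrite floor_lt_int intrD1 ltr_leD // floorD1_gt.
lia.
Qed.

Lemma fdiff_mul_increment (c : R) (h : int -> int) (n : int) : 0 <= c <= 1 ->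
  fdiff c n * (h (Num.floor (c * n%:~R) + 1) - h (Num.floor (c * n%:~R)))
  = h (Num.floor (c * (n + 1)%:~R)) - h (Num.floor (c * n%:~R)).
Proof.
move=> c01; rewrite /fdiff.
have -> : c * (n + 1)%:~R = c * n%:~R + c by rewrite intrD1 mulrDr mulr1.
by case: (@floorD_unit_interval (c * n%:~R) c c01) => ->;
  rewrite ?subrr ?mul0r // addrAC subrr add0r mul1r.
Qed.

End FloorJumps.

Theorem lemma8 (R : realType) (c d : R)
  (hc0 : 0 < c) (hc1 : c < 1) (hci : irrational c)
  (hd0 : 0 < d) (hd1 : d < 1) (hdi : irrational d)
  (k : nat) (t : R) (ht : 0 <= t) :
  \sum_(1 <= n < `|Num.floor t|%N.+1)
     fdiff c n%:Z * fdiff d (Num.floor (c * n%:R) + k%:Z + 1)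
  = Num.floor (d * (Num.floor (c * (Num.floor t + 1)%:~R) + k%:Z + 1)%:~R)
    - Num.floor (d * (k%:Z + 1)%:~R).
Proof.
pose h (m : int) := Num.floor (d * (m + k%:Z + 1)%:~R).
pose F (n : nat) := h (Num.floor (c * n%:R)).
have c01 : 0 <= c <= 1 by rewrite !ltW.
have increment n : fdiff c n%:Z * fdiff d (Num.floor (c * n%:R) + k%:Z + 1)
                   = F n.+1 - F n.
  rewrite /F; have -> : n.+1%:R = (n%:Z + 1)%:~R :> R by rewrite intrD1 -natr1.
  rewrite -(fdiff_mul_increment c h n c01).
  by rewrite /h /fdiff [_ + 1 + k%:Z]addrAC.
rewrite (eq_bigr (fun n => F n.+1 - F n)) => [|n _]; last exact: increment.
rewrite telescope_sumr // /F /h mulr1.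
have floor_c : Num.floor c = 0 by apply: floor_def; rewrite add0r (ltW hc0) hc1.
have floor_t : `|Num.floor t|%N.+1%:R = (Num.floor t + 1)%:~R :> R.
  by rewrite intrD1 -natr1 pmulrn gez0_abs ?floor_ge0.
by rewrite floor_c add0r floor_t.
Qed.
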